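(* Let $q$ be a prime power. Then $\mathbb{F}_q$ admits a complete mapping that permutes all elements of $\mathbb{F}_q$ in a single cycle (i.e., of cycle type $x_q$) if and only if $q$ is odd.
   Context: A complete mapping of the field $\mathbb{F}_q$ is a permutation $f$ of $\mathbb{F}_q$ such that $x\mapsto f(x)+x$ is also a permutation of $\mathbb{F}_q$. *)

From mathcomp Require Import all_boot all_order all_algebra all_fingroup all_field.
Set Implicit Arguments. Unset Strict Implicit. Unset Printing Implicit Defensive.
Import GRing.Theory.
Local Open Scope ring_scope.

(* A complete mapping of a finite field F: a permutation f of F such that
   x |-> f x + x is also a permutation of F (i.e. injective, F being finite). *)
Definition complete_mapping (F : finFieldType) (f : {perm F}) : Prop :=
  injective (fun x : F => f x + x).

Definition single_cycle (F : finFieldType) (f : {perm F}) : Prop :=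
  #|porbits f| = 1%N.

From mathcomp Require Import all_boot all_order all_algebra all_fingroup all_field.
From mathcomp Require Import zify.
Set Implicit Arguments. Unset Strict Implicit. Unset Printing Implicit Defensive.
Import GRing.Theory.
Local Open Scope ring_scope.

(* In odd characteristic p the additive group of F is elementary abelian, so
   it is reached from {0} by repeatedly passing from a subgroup S to
   S + <e> for some e outside S. A complete mapping f of S that is a single
   cycle extends to S + <e>: on the coset s + <e> walk s, s + e, ...,
   s + (p-1)e and then jump to f s. The new sums x + f' x are
   2s + (2j+1)e for j < p - 1, which avoid the coset S + (p-1)e and determine
   (s, j) because 2 is invertible, and f s + s + (p-1)e, which are distinct
   because f is complete. In characteristic 2, f x + x = 0 for some x, i.e.
   f fixes x, so f cannot be a single cycle on the q >= 2 elements of F. *)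

Lemma surj_injective (T : finType) (f : T -> T) :
  (forall y, exists x, y = f x) -> injective f.
Proof.
move=> f_surj; have /image_injP f_inj : #|codom f| == #|T|.
  rewrite eqn_leq -[X in (_ <= X)%N](size_codom f) card_size /=.
  by apply/subset_leq_card/subsetP => y _; have [x ->] := f_surj y; apply: codom_f.
by move=> x y; apply: f_inj.
Qed.

Section PermCycles.
Variables (T : finType) (s : {perm T}).

Lemma porbits1P x : reflect (porbit s x = [set: T]) (#|porbits s| == 1%N).
Proof.
apply: (iffP cards1P) => [[A sA]|sx].
  have orbA y : porbit s y = A by apply/set1P; rewrite -sA imset_f.
  by apply/setP => y; rewrite inE (orbA x) -(orbA y) porbit_id.
exists (porbit s x); apply/setP => A; rewrite inE.
apply/imsetP/eqP => [[y _ ->]|->]; last by exists x.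
by apply/eqP; rewrite eq_porbit_mem sx inE.
Qed.

Lemma porbit_fixed x : s x = x -> porbit s x = [set x].
Proof.
move=> sx; apply/setP => y; rewrite inE; apply/porbitP/eqP => [[i ->]|->].
  by rewrite permX; elim: i => //= i ->.
by exists 0%N; rewrite expg0 perm1.
Qed.

End PermCycles.

Lemma eqn_mod_double p j k : odd p -> (j.*2 == k.*2 %[mod p]) = (j == k %[mod p]).
Proof.
move=> p_odd; wlog le_kj : j k / (k <= j)%N.
  by move=> W; case: (leqP k j) => [|/ltnW] /W; rewrite // [RHS]eq_sym => <-; rewrite eq_sym.
by rewrite !eqn_mod_dvd ?leq_double // -doubleB -mul2n Gauss_dvdr // coprimen2.
Qed.

Lemma eqn_mod_doubleS p j k :
  odd p -> (j.*2.+1 == k.*2.+1 %[mod p]) = (j == k %[mod p]).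
Proof. by move=> p_odd; rewrite -[j.*2.+1]addn1 -[k.*2.+1]addn1 eqn_modDr eqn_mod_double. Qed.

Lemma neq_mod_doubleS_pred p j :
  odd p -> (j.+1 < p)%N -> (j.*2.+1 == p.-1 %[mod p]) = false.
Proof.
move=> p_odd jp; apply/negbTE; rewrite -(eqn_modDr 1) !addn1 -(doubleS j).
rewrite prednK ?(leq_ltn_trans _ jp) // modnn -mul2n.
by rewrite -/(dvdn p _) Gauss_dvdr ?coprimen2 // gtnNdvd.
Qed.

Section CompleteMappings.
Variable V : finZmodType.

Definition complete_cycle_on (S : {set V}) (f : V -> V) :=
  [/\ {homo f : x / x \in S}, {in S &, injective (fun x => f x + x)}
    & {in S &, forall x y, exists k, y = iter k f x}].

Lemma complete_fixed (f : V -> V) :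
  (forall x : V, x *+ 2 = 0) -> injective (fun x => f x + x) -> exists x, f x = x.
Proof.
move=> V2 f_compl; have /codomP [x /esym/eqP] := inj_card_onto f_compl (leqnn _) 0.
rewrite addr_eq0 => /eqP fx; exists x.
by apply/eqP; rewrite fx eq_sym -addr_eq0 -mulr2n V2.
Qed.

Lemma complete_cycle_perm (f : V -> V) : complete_cycle_on [set: V] f ->
  exists g : {perm V}, injective (fun x => g x + x) /\ #|porbits g| = 1%N.
Proof.
case=> _ f_compl f_cyc.
have f_inj : injective f.
  apply: surj_injective => y; have [k ->] := f_cyc (f 0) y (in_setT _) (in_setT _).
  by exists (iter k f 0); rewrite -iterSr.
exists (perm f_inj); split=> [x y /=|]; first by rewrite !permE; apply: f_compl.
apply/eqP/(porbits1P _ 0)/setP => y; rewrite inE; apply/porbitP.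
have [k ->] := f_cyc 0 y (in_setT _) (in_setT _).
by exists k; rewrite permX; apply: eq_iter => z; rewrite permE.
Qed.

Section Exponent.
Variables (p : nat) (p_prime : prime p) (p_odd : odd p).
Hypothesis pV : forall x : V, x *+ p = 0.

Lemma mulrn_modp (x : V) n : x *+ n = x *+ (n %% p).
Proof. by rewrite {1}(divn_eq n p) mulrnDr mulrnA pV add0r. Qed.

Lemma mulrn_predp (x : V) : x *+ p.-1 = - x.
Proof.
apply/eqP; rewrite -addr_eq0 -mulrSr prednK ?pV //.
exact: prime_gt0.
Qed.

(* [j + k * p.-1] represents [j - k] modulo p without truncated subtraction. *)
Lemma mulrn_subp (x : V) j k : x *+ (j + k * p.-1) = x *+ j - x *+ k.
Proof. by rewrite mulrnDr mulrnA mulrn_predp. Qed.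

Lemma mulr2n_inj : injective (fun x : V => x *+ 2).
Proof.
have half2 : (2 * p.+1./2 = p.+1)%N.
  by rewrite -[RHS]odd_double_half /= p_odd /= -mul2n.
move=> x y /= /(congr1 (fun z => z *+ p.+1./2)).
by rewrite -!mulrnA half2 !mulrS !pV !addr0.
Qed.

Section Extension.
Variables (S : {set V}) (e : V).
Hypotheses (S_zmod : zmod_closed S) (e_notin : e \notin S).

Let memS0 : 0 \in S := S_zmod.1.
Let memSB : {in S &, forall x y, x - y \in S} := S_zmod.2.
Let memSN : {in S, forall x, - x \in S} := GRing.zmod_closedN S_zmod.
Let memSD : {in S &, forall x y, x + y \in S} := (GRing.zmod_closedD S_zmod).2.

Let memS_mulrn x n : x \in S -> x *+ n \in S.
Proof. by move=> xS; elim: n => [|n IH]; rewrite ?memS0 // mulrS memSD. Qed.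

Lemma coef_eq_mod s t j k :
  s \in S -> t \in S -> s + e *+ j = t + e *+ k -> j = k %[mod p].
Proof.
move=> sS tS st; pose d := (j + k * p.-1)%N.
have dS : e *+ d \in S.
  rewrite mulrn_subp.
  have -> : e *+ j - e *+ k = t - s by rewrite -[e *+ j](addKr s) st addrA addrK addrC.
  exact: memSB.
have p_d : (p %| d)%N.
  apply: contraT; rewrite -prime_coprime // => /eqP co.
  have [a _] := Bezoutl d (prime_gt0 p_prime); rewrite co => /dvdnP [m da].
  have : e + (e *+ d) *+ a = 0 by rewrite -mulrnA -mulrS mulnC -add1n da mulrnA pV.
  by move/eqP; rewrite addr_eq0 => /eqP e_eq; move: e_notin; rewrite e_eq memSN // memS_mulrn.
rewrite -(modnMDl k j); have -> : (k * p + j = d + k)%N.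
  by rewrite /d -[p in (k * p)%N](prednK (prime_gt0 p_prime)) mulnS addnC addnA addnAC.
by rewrite -modnDml (eqP p_d).
Qed.

Definition adjoin := [set s + e *+ j | s : V in S, j : 'I_p].

Lemma mem_adjoin s j : s \in S -> (j < p)%N -> s + e *+ j \in adjoin.
Proof. by move=> sS jp; apply/imset2P; exists s (Ordinal jp). Qed.

Lemma adjoinP x : x \in adjoin ->
  exists s j, [/\ s \in S, (j < p)%N & x = s + e *+ j].
Proof. by case/imset2P => s j sS _ ->; exists s, j. Qed.

Lemma adjoin_zmod : zmod_closed adjoin.
Proof.
split; first by have := mem_adjoin memS0 (prime_gt0 p_prime); rewrite addr0.
move=> _ _ /adjoinP[s [j [sS jp ->]]] /adjoinP[t [k [tS kp ->]]].
rewrite opprD addrACA -mulrn_subp mulrn_modp.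
by rewrite mem_adjoin ?memSB ?ltn_pmod ?prime_gt0.
Qed.

Lemma sub_adjoin : S \subset adjoin.
Proof.
by apply/subsetP => s sS; have := mem_adjoin sS (prime_gt0 p_prime); rewrite addr0.
Qed.

Lemma proper_adjoin : S \proper adjoin.
Proof.
apply/properP; split; first exact: sub_adjoin.
by exists e => //; have := mem_adjoin memS0 (prime_gt1 p_prime); rewrite add0r.
Qed.

Definition adjoin_idx x : nat :=
  if [pick j : 'I_p | x - e *+ j \in S] is Some j then nat_of_ord j else 0.

Lemma adjoin_idxE s j : s \in S -> (j < p)%N -> adjoin_idx (s + e *+ j) = j.
Proof.
move=> sS jp; rewrite /adjoin_idx; case: pickP => [i iS|/(_ (Ordinal jp))]; last first.
  by rewrite addrK sS.
have := coef_eq_mod sS iS (esym (subrK _ _)).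
by rewrite !modn_small // => ->.
Qed.

Definition adjoin_map (f : V -> V) x :=
  let j := adjoin_idx x in if (j < p.-1)%N then x + e else f (x - e *+ j).

Lemma adjoin_mapE f s j : s \in S -> (j < p)%N ->
  adjoin_map f (s + e *+ j) = if (j < p.-1)%N then s + e *+ j.+1 else f s.
Proof.
by move=> sS jp; rewrite /adjoin_map adjoin_idxE // addrK mulrSr addrA.
Qed.

Section AdjoinMap.
Variable f : V -> V.
Hypothesis f_cc : complete_cycle_on S f.

Lemma adjoin_map_homo : {homo adjoin_map f : x / x \in adjoin}.
Proof.
case: f_cc => f_homo _ _ _ /adjoinP[s [j [sS jp ->]]]; rewrite adjoin_mapE //.
case: ifP => [jlt|_]; first by rewrite mem_adjoin //; lia.
exact: (subsetP sub_adjoin _ (f_homo _ sS)).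
Qed.

Lemma adjoin_map_complete : {in adjoin &, injective (fun x => adjoin_map f x + x)}.
Proof.
case: f_cc => f_homo f_compl _.
have midE u i : u + e *+ i.+1 + (u + e *+ i) = u *+ 2 + e *+ i.*2.+1.
  by rewrite addrACA -mulrnDr mulr2n addSn addnn.
have lastE u : f u + (u + e *+ p.-1) = (f u + u) + e *+ p.-1 by rewrite addrA.
have mid_last u v i : u \in S -> v \in S -> (i < p.-1)%N ->
    u *+ 2 + e *+ i.*2.+1 <> (f v + v) + e *+ p.-1.
  move=> uS vS ip /(coef_eq_mod (memS_mulrn 2 uS) (memSD (f_homo v vS) vS)) /eqP.
  by rewrite neq_mod_doubleS_pred //; lia.
move=> _ _ /adjoinP[s [j [sS jp ->]]] /adjoinP[t [k [tS kp ->]]] /=.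
rewrite !adjoin_mapE //; case: ifP => jlt; case: ifP => klt; rewrite ?midE ?lastE.
- move=> st; have /eqP := coef_eq_mod (memS_mulrn 2 sS) (memS_mulrn 2 tS) st.
  rewrite eqn_mod_doubleS // !modn_small // => /eqP jk.
  by move: st; rewrite jk => /addIr /mulr2n_inj ->.
- have -> : k = p.-1 by lia.
  by rewrite lastE => /(mid_last _ _ _ sS tS jlt).
- have -> : j = p.-1 by lia.
  by rewrite lastE => /esym/(mid_last _ _ _ tS sS klt).
- have [-> ->] : j = p.-1 /\ k = p.-1 by lia.
  by rewrite !lastE => /addIr /(f_compl _ _ sS tS) ->.
Qed.

Lemma iter_adjoin_map s i :
  s \in S -> (i < p)%N -> iter i (adjoin_map f) s = s + e *+ i.
Proof.
move=> sS; elim: i => [|i IH] ip /=; first by rewrite addr0.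
by rewrite IH ?adjoin_mapE ?ifT //; lia.
Qed.

Lemma iter_adjoin_map_p s : s \in S -> iter p (adjoin_map f) s = f s.
Proof.
move=> sS; have p_gt0 := prime_gt0 p_prime.
rewrite -(prednK p_gt0) iterS iter_adjoin_map ?adjoin_mapE ?ltnn //; lia.
Qed.

Lemma iter_adjoin_map_mulp s m :
  s \in S -> iter (m * p) (adjoin_map f) s = iter m f s.
Proof.
case: f_cc => f_homo _ _ sS.
have iterS_S n : iter n f s \in S by elim: n => //= n; apply: f_homo.
by elim: m => // m IH; rewrite mulSn iterD IH iter_adjoin_map_p.
Qed.

Lemma adjoin_map_cyclic :
  {in adjoin &, forall x y, exists k, y = iter k (adjoin_map f) x}.
Proof.
case: f_cc => f_homo _ f_cyc.
move=> _ _ /adjoinP[s [j [sS jp ->]]] /adjoinP[t [k [tS kp ->]]].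
have [m tE] := f_cyc _ _ (f_homo s sS) tS.
exists (k + m * p + (p - j))%N.
have to_fs : iter (p - j) (adjoin_map f) (s + e *+ j) = f s.
  by rewrite -(iter_adjoin_map sS jp) -iterD subnK ?iter_adjoin_map_p // ltnW.
by rewrite iterD to_fs iterD iter_adjoin_map_mulp ?f_homo // -tE iter_adjoin_map.
Qed.

Lemma adjoin_complete_cycle : complete_cycle_on adjoin (adjoin_map f).
Proof.
by split; [exact: adjoin_map_homo | exact: adjoin_map_complete | exact: adjoin_map_cyclic].
Qed.

End AdjoinMap.
End Extension.

Lemma complete_cycle_setT : exists f : V -> V, complete_cycle_on [set: V] f.
Proof.
suff grow (S : {set V}) : zmod_closed S -> (exists f, complete_cycle_on S f) ->
    exists f, complete_cycle_on [set: V] f.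
  apply: (grow [set 0]).
    by split=> [|x y]; rewrite !inE // => /eqP -> /eqP ->; rewrite subr0.
  by exists id; split=> // x y; rewrite !inE => /eqP -> /eqP -> //; exists 0%N.
have [n] := ubnP #|~: S|; elim: n S => // n IH S le_n S_zmod [f f_cc].
have [S_T | S_neqT] := eqVneq S setT; first by exists f; rewrite -S_T.
have /properP[_ [e _ e_notin]] : S \proper setT by rewrite properT.
apply: (IH (adjoin S e)).
- have lt_card : (#|~: adjoin S e| < #|~: S|)%N.
    by apply: proper_card; rewrite properC; apply: proper_adjoin.
  by apply: leq_trans lt_card _; rewrite -ltnS.
- exact: adjoin_zmod.
- by exists (adjoin_map S e f); apply: adjoin_complete_cycle.
Qed.

Theorem elementary_abelian_complete_cycle :
  exists g : {perm V}, injective (fun x => g x + x) /\ #|porbits g| = 1%N.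
Proof. by have [f] := complete_cycle_setT; apply: complete_cycle_perm. Qed.

End Exponent.

Lemma exponent2_complete_cycle (g : {perm V}) :
  (forall x : V, x *+ 2 = 0) -> injective (fun x => g x + x) ->
  #|porbits g| = 1%N -> #|V| = 1%N.
Proof.
move=> V2 g_compl /eqP g_cyc; have [x gx] := complete_fixed V2 g_compl.
by rewrite -cardsT -(porbits1P _ x g_cyc) porbit_fixed ?cards1.
Qed.

End CompleteMappings.

Lemma odd_card_finField (F : finFieldType) p : p \in [pchar F] -> odd #|F| = odd p.
Proof.
move=> pF; have cardF : #|F| = (p ^ logn p #|F|)%N := card_pprimeChar pF.
rewrite {1}cardF oddX; case: eqP => //= n0.
by have := finNzRing_gt1 F; rewrite cardF n0.
Qed.

Theorem corollary1p5 (F : finFieldType) :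
  (exists f : {perm F}, complete_mapping f /\ single_cycle f) <-> odd #|F|.
Proof.
have [p p_prime pF] := finPcharP F.
rewrite (odd_card_finField pF); split=> [[f [f_compl f_cyc]]|p_odd].
  apply: contraT => p_even; have p2 : p = 2%N.
    by case: (even_prime p_prime) => // p_odd; rewrite p_odd in p_even.
  have F2 (x : F) : x *+ 2 = 0 by rewrite -p2 (mulrn_pchar pF).
  by have := finNzRing_gt1 F; rewrite (exponent2_complete_cycle F2 f_compl f_cyc).
exact: elementary_abelian_complete_cycle p_prime p_odd (mulrn_pchar pF).
Qed.
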